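(* Fix a trial $r$ and assume the surrogate satisfies causal necessity in trial $r$, i.e. $ACE_{ss,r}=ACE_{\bar{s}\bar{s},r}=0$. (i) Under monotonicity ($P(U=\bar{s}s\mid R=r)=0$) and $\pi_{s\bar{s},r}>0$: $ACE^Y_r=ACE^S_r\times ACE_{s\bar{s},r}$. (ii) Without monotonicity, assume $\pi_{s\bar{s},r}>0$, $\pi_{\bar{s}s,r}>0$ and $ACE^S_r>0$. If $ACE_{s\bar{s},r}+ACE_{\bar{s}s,r}\ge 0$, then $$ACE^S_r\, ACE_{s\bar{s},r}\le ACE^Y_r\le \tfrac12(ACE_{s\bar{s},r}+ACE_{\bar{s}s,r})+\tfrac12 ACE^S_r\,(ACE_{s\bar{s},r}-ACE_{\bar{s}s,r}),$$ and otherwise $$\tfrac12(ACE_{s\bar{s},r}+ACE_{\bar{s}s,r})+\tfrac12 ACE^S_r\,(ACE_{s\bar{s},r}-ACE_{\bar{s}s,r})\le ACE^Y_r\le ACE^S_r\, ACE_{s\bar{s},r}.$$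
   Context: A unit has trial $R$, treatment $Z\in\{0,1\}$, and binary potential surrogate and endpoint $S(z),Y(z)$, $z=0,1$. $U=(S(1),S(0))$ with values $(1,1),(1,0),(0,1),(0,0)$ labeled $ss,s\bar{s},\bar{s}s,\bar{s}\bar{s}$; $\pi_{ur}=P(U=u\mid R=r)$. For strata with $\pi_{ur}>0$, $ACE_{ur}=E\{Y(1)-Y(0)\mid U=u,R=r\}$; causal necessity is understood as $E\{(Y(1)-Y(0))1\{U=u\}\mid R=r\}=0$ for $u=ss,\bar{s}\bar{s}$ (equivalently $ACE_{ur}=0$ whenever $\pi_{ur}>0$). $ACE^S_r=E\{S(1)-S(0)\mid R=r\}$ and $ACE^Y_r=E\{Y(1)-Y(0)\mid R=r\}$. *)

(* The conditional law given R = r of the potential outcomes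
   (S(1), S(0), Y(1), Y(0)) is a probability mass function p on bool^4. *)
From HB Require Import structures.
From mathcomp Require Import all_boot all_order all_algebra.
Set Implicit Arguments. Unset Strict Implicit. Unset Printing Implicit Defensive.
Import Order.TTheory GRing.Theory Num.Theory.
Local Open Scope ring_scope.

Definition outcome := ((bool * bool) * (bool * bool))%type.

Definition U (w : outcome) : bool * bool := w.1.
Definition S1 (w : outcome) : bool := w.1.1.
Definition S0 (w : outcome) : bool := w.1.2.
Definition Y1 (w : outcome) : bool := w.2.1.
Definition Y0 (w : outcome) : bool := w.2.2.

Definition ss : bool * bool := (true, true).
Definition ssbar : bool * bool := (true, false).
Definition sbars : bool * bool := (false, true).
Definition sbarsbar : bool * bool := (false, false).

Definition is_pmf (R : realFieldType) (p : outcome -> R) : Prop :=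
  (forall w, 0 <= p w) /\ \sum_(w : outcome) p w = 1.

Definition pi_ (R : realFieldType) (p : outcome -> R) (u : bool * bool) : R :=
  \sum_(w : outcome | U w == u) p w.

Definition EY_on (R : realFieldType) (p : outcome -> R) (u : bool * bool) : R :=
  \sum_(w : outcome | U w == u) p w * ((Y1 w)%:R - (Y0 w)%:R).

(* ACE_{u r} = E{Y(1) - Y(0) | U = u, R = r}  (meaningful when pi_{u r} > 0) *)
Definition ACE_ (R : realFieldType) (p : outcome -> R) (u : bool * bool) : R :=
  EY_on p u / pi_ p u.

Definition ACE_S (R : realFieldType) (p : outcome -> R) : R :=
  \sum_(w : outcome) p w * ((S1 w)%:R - (S0 w)%:R).
Definition ACE_Y (R : realFieldType) (p : outcome -> R) : R :=
  \sum_(w : outcome) p w * ((Y1 w)%:R - (Y0 w)%:R).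

Definition causal_necessity (R : realFieldType) (p : outcome -> R) : Prop :=
  EY_on p ss = 0 /\ EY_on p sbarsbar = 0.

(** Since [S(1) - S(0)] equals [1] on [ss-bar], [-1] on [s-bar s] and [0]
    elsewhere, [ACE^S = pi_ss-bar - pi_s-bar s]; under causal necessity only the
    two discordant strata contribute to [ACE^Y], so
    [ACE^Y = a pi_ss-bar + b pi_s-bar s] with [a], [b] the two stratum effects.
    This is exact under monotonicity; otherwise the two bounds differ from
    [ACE^Y] by [pi_s-bar s (a + b)] and [(1 - pi_ss-bar - pi_s-bar s)(a + b) / 2],
    whose signs are that of [a + b]. *)
From HB Require Import structures.
From mathcomp Require Import all_boot all_order all_algebra.
From mathcomp Require Import ring lra.
Import Order.TTheory GRing.Theory Num.Theory.
Local Open Scope ring_scope.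

Lemma big_strata (R : nmodType) (F : bool * bool -> R) :
  \sum_(u : bool * bool) F u = F ss + F ssbar + F sbars + F sbarsbar.
Proof.
rewrite (eq_bigr (fun u => F (u.1, u.2))) => [|[] //].
by rewrite -(pair_bigA _ (fun a b => F (a, b))) /= !big_bool /= !addrA.
Qed.

Lemma big_outcome_strata (R : nmodType) (F : outcome -> R) :
  \sum_(w : outcome) F w = \sum_(u : bool * bool) \sum_(w | U w == u) F w.
Proof. exact: (partition_big U predT). Qed.

Section Strata.

Context {R : realFieldType} {p : outcome -> R}.

Lemma ACE_Y_strata :
  ACE_Y p = EY_on p ss + EY_on p ssbar + EY_on p sbars + EY_on p sbarsbar.
Proof. by rewrite /ACE_Y big_outcome_strata big_strata. Qed.

Lemma pi_strata_sum : is_pmf p ->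
  pi_ p ss + pi_ p ssbar + pi_ p sbars + pi_ p sbarsbar = 1.
Proof. by case=> _ <-; rewrite big_outcome_strata big_strata. Qed.

Lemma big_stratum_const (u : bool * bool) (f : outcome -> R) (c : R) :
  (forall y, f (u, y) = c) -> \sum_(w | U w == u) p w * f w = pi_ p u * c.
Proof.
move=> fc; rewrite /pi_ mulr_suml.
by apply: eq_bigr => -[v y] /eqP; rewrite /U /= => ->; rewrite fc.
Qed.

Lemma ACE_S_strata : ACE_S p = pi_ p ssbar - pi_ p sbars.
Proof.
rewrite /ACE_S big_outcome_strata big_strata.
rewrite (big_stratum_const ss _ 0) => [|y]; last exact: subrr.
rewrite (big_stratum_const ssbar _ 1) => [|y]; last exact: subr0.
rewrite (big_stratum_const sbars _ (-1)) => [|y]; last exact: sub0r.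
rewrite (big_stratum_const sbarsbar _ 0) => [|y]; last exact: subrr.
by rewrite !mulr0 mulr1 mulrN1 addr0 add0r.
Qed.

Lemma pi_ge0 (u : bool * bool) : (forall w, 0 <= p w) -> 0 <= pi_ p u.
Proof. by move=> p_ge0; apply: sumr_ge0 => w _. Qed.

Lemma EY_on_pi_eq0 {u : bool * bool} : (forall w, 0 <= p w) ->
  pi_ p u = 0 -> EY_on p u = 0.
Proof.
move=> p_ge0 /(psumr_eq0P (fun w _ => p_ge0 w)) pu0.
by apply: big1 => w /pu0 ->; rewrite mul0r.
Qed.

Lemma EY_onE (u : bool * bool) : pi_ p u != 0 -> EY_on p u = ACE_ p u * pi_ p u.
Proof. by move=> pu_neq0; rewrite /ACE_ divfK. Qed.

Lemma ACE_Y_necessity : causal_necessity p ->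
  ACE_Y p = EY_on p ssbar + EY_on p sbars.
Proof. by case=> ss0 sbarsbar0; rewrite ACE_Y_strata ss0 sbarsbar0 add0r addr0. Qed.

End Strata.

Lemma weighted_sum_bounds (R : realFieldType) (x y a b : R) :
  0 <= y -> x + y <= 1 ->
  let m := 2^-1 * (a + b) + 2^-1 * (x - y) * (a - b) in
  (0 <= a + b -> (x - y) * a <= a * x + b * y /\ a * x + b * y <= m) /\
  (a + b < 0 -> m <= a * x + b * y /\ a * x + b * y <= (x - y) * a).
Proof.
move=> y_ge0 xy_le1 m.
have lower_gap : a * x + b * y - (x - y) * a = y * (a + b) by ring.
have upper_gap : m - (a * x + b * y) = 2^-1 * (1 - x - y) * (a + b) by rewrite /m; field.
have rest_ge0 : 0 <= 2^-1 * (1 - x - y) :> R by apply: mulr_ge0; lra.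
split=> ab_sign; split; rewrite -subr_ge0 ?lower_gap ?upper_gap.
- exact: mulr_ge0.
- exact: mulr_ge0.
- by rewrite -opprB upper_gap oppr_ge0 mulr_ge0_le0 // ltW.
- by rewrite -opprB lower_gap oppr_ge0 mulr_ge0_le0 // ltW.
Qed.

Theorem proposition3 (R : realFieldType) (p : outcome -> R) :
  is_pmf p -> causal_necessity p ->
  (* (i) monotonicity *)
  (pi_ p sbars = 0 -> 0 < pi_ p ssbar ->
     ACE_Y p = ACE_S p * ACE_ p ssbar) /\
  (* (ii) without monotonicity *)
  (0 < pi_ p ssbar -> 0 < pi_ p sbars -> 0 < ACE_S p ->
     let a := ACE_ p ssbar in
     let b := ACE_ p sbars in
     let m := 2^-1 * (a + b) + 2^-1 * ACE_S p * (a - b) in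
     (0 <= a + b -> ACE_S p * a <= ACE_Y p /\ ACE_Y p <= m) /\
     (a + b < 0 -> m <= ACE_Y p /\ ACE_Y p <= ACE_S p * a)).
Proof.
move=> pmf_p necessity; have p_ge0 := pmf_p.1.
rewrite ACE_Y_necessity // ACE_S_strata; split.
  move=> pi_sbars0 /lt0r_neq0 /EY_onE ->.
  by rewrite (EY_on_pi_eq0 p_ge0 pi_sbars0) pi_sbars0 subr0 addr0 mulrC.
move=> /lt0r_neq0 /EY_onE -> /lt0r_neq0 /EY_onE -> _ a b m.
apply: weighted_sum_bounds; first exact: pi_ge0.
have := pi_strata_sum pmf_p; have := pi_ge0 ss p_ge0; have := pi_ge0 sbarsbar p_ge0.
lra.
Qed.
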